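(* Let $\Xi_h=\{v\in X_h: b_h(v,q)=0\ \text{for all } q\in M_h\}$. There exists a constant $\alpha>0$ such that $s_h(v,v)\ge\alpha\|v\|_*^2$ for all $v\in\Xi_h$.
   Context: Let $\Omega\subset\mathbb R^2$ be an open bounded domain with Lipschitz boundary, with coefficients $a_{ij}$ ($i,j=1,2$, forming a symmetric positive definite uniformly bounded tensor) and $c$ (non-positive, uniformly bounded). $\mathcal T_h$ is a shape-regular polygonal partition of $\Omega$, $h_T=\operatorname{diam}T$, $\mathcal E_h$ all edges, $\mathcal E_h^0$ interior edges. For an integer $k\ge2$, $X_h$ (resp. $M_h$) consists of functions that are polynomials of degree $\le k$ (resp. $\le k-2$) on each $T\in\mathcal T_h$. $Q_{k-2}$ is the $L^2$ projection onto $M_h$. Jumps: $[\![v]\!]=v|_{T_1}-v|_{T_2}$ on an interior edge $e=\partial T_1\cap\partial T_2$, $[\![v]\!]=v$ on a boundary edge; $[\![\nabla v]\!]$ analogously on interior edges. $s_h(u,v)=\sum_{e\in\mathcal E_h}h_T^{-3}\langle[\![u]\!],[\![v]\!]\rangle_e+\sum_{e\in\mathcal E_h^0}h_T^{-1}\langle[\![\nabla u]\!],[\![\nabla v]\!]\rangle_e$ ($h_T$ the diameter of an element containing $e$). $b_h(v,q)=\sum_{T}\big(\sum_{i,j=1}^2a_{ij}\partial^2_{ij}v+cv,q\big)_T$. $\|v\|_*=\big(\sum_{T}\|Q_{k-2}(\sum_{i,j}a_{ij}\partial^2_{ij}v+cv)\|_T^2+s_h(v,v)\big)^{1/2}$.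 *)

From mathcomp Require Import all_boot all_order all_algebra.
From mathcomp Require Import all_classical all_reals all_analysis.
Import Order.TTheory GRing.Theory Num.Theory numFieldNormedType.Exports.
Set Implicit Arguments.
Unset Strict Implicit.
Unset Printing Implicit Defensive.
Local Open Scope classical_set_scope.
Local Open Scope ring_scope.

Section Defs.
Context {R : realType}.
Local Notation P := (R * R)%type.

Definition edist (x y : P) : R := Num.sqrt ((x.1 - y.1) ^+ 2 + (x.2 - y.2) ^+ 2).
Definition eball (z : P) (r : R) : set P := [set x | edist z x < r].
Definition lerp (a b : P) (t : R) : P :=
  ((1 - t) * a.1 + t * b.1, (1 - t) * a.2 + t * b.2).
Definition seg (a b : P) : set P := [set lerp a b t | t in `[0, 1]].
Definition oseg (a b : P) : set P := [set lerp a b t | t in `]0, 1[].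
Definition diam (T : set P) : R :=
  sup [set r | exists x y, T x /\ T y /\ r = edist x y].
Definition ebounded (T : set P) := exists Mb : R, forall x, T x -> edist (0, 0) x <= Mb.
Definition boundary (T : set P) : set P := closure T `\` interior T.

Definition polygon (T : set P) : Prop :=
  open T /\ connected T /\ T !=set0 /\ ebounded T /\
  exists (n : nat) (v : nat -> P), (3 <= n)%N /\
    boundary T = \bigcup_(i in [set i | (i < n)%N]) seg (v i) (v (i.+1 %% n)%N).

Definition rotc (th : R) (x0 y : P) : P :=
  (cos th * (y.1 - x0.1) + sin th * (y.2 - x0.2),
   - sin th * (y.1 - x0.1) + cos th * (y.2 - x0.2)).

(** bounded domain (open, connected) with Lipschitz boundary: locally the
    domain lies below the graph of a Lipschitz function *)
Definition lipschitz_domain (O : set P) : Prop :=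
  open O /\ connected O /\ O !=set0 /\ ebounded O /\
  forall x0, boundary O x0 ->
    exists (th r L : R) (g : R -> R), 0 < r /\ 0 <= L /\
      (forall s t, `|g s - g t| <= L * `|s - t|) /\
      forall y, eball x0 r y -> (O y <-> (rotc th x0 y).2 < g (rotc th x0 y).1).

Definition poly2 (m : nat) (p : P -> R) : Prop :=
  exists cf : nat -> nat -> R, forall x : P,
    p x = \sum_(i < m.+1) \sum_(j < m.+1 | (i + j <= m)%N)
            cf i j * x.1 ^+ i * x.2 ^+ j.

Definition ebasis (i : 'I_2) : P := if i == ord0 then (1, 0) else (0, 1).
Definition pd (i : 'I_2) (f : P -> R) : P -> R := fun x => 'D_(ebasis i) f x.

Definition leb2 := ((@lebesgue_measure R) \x (@lebesgue_measure R))%E.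
Definition area_int (T : set P) (f : P -> R) : R := \int[leb2]_(x in T) f x.
(** integral over the segment [a,b] w.r.t. arc length *)
Definition edge_int (a b : P) (f : P -> R) : R :=
  edist a b * \int[@lebesgue_measure R]_(t in `[0, 1]) f (lerp a b t).

(** Polygonal mesh: elements (open polygons) and edges; each edge is a
    segment [ea e, eb e] with a first adjacent element eT1 e and, for interior
    edges, a second adjacent element eT2 e = Some T2 (None for boundary edges). *)
Local Unset Implicit Arguments.
Record mesh := Mesh {
  nel : nat;
  elem : 'I_nel -> set P;
  ned : nat;
  ea : 'I_ned -> P;
  eb : 'I_ned -> P;
  eT1 : 'I_ned -> 'I_nel;
  eT2 : 'I_ned -> option 'I_nel }.
Local Set Implicit Arguments.

Definition hT (M : mesh) (T : 'I_(nel M)) : R := diam (elem M T).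

(** M is a polygonal partition of O, shape regular with parameter rho *)
Definition is_mesh (O : set P) (rho : R) (M : mesh) : Prop :=
  (forall T, polygon (elem M T) /\ elem M T `<=` O) /\
      (forall T T', T != T' -> elem M T `&` elem M T' = set0) /\
      \bigcup_(T in setT) closure (elem M T) = closure O /\
      (forall e, ea M e != eb M e /\ seg (ea M e) (eb M e) `<=` boundary (elem M (eT1 M e))) /\
      (forall e T2, eT2 M e = Some T2 ->
         [/\ T2 != eT1 M e, seg (ea M e) (eb M e) `<=` boundary (elem M T2)
           & oseg (ea M e) (eb M e) `<=` O]) /\
      (forall e, eT2 M e = None -> seg (ea M e) (eb M e) `<=` boundary O) /\
      (forall e e', e != e' -> oseg (ea M e) (eb M e) `&` oseg (ea M e') (eb M e') = set0) /\
      (forall T, boundary (elem M T) =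
         \bigcup_(e in [set e | eT1 M e = T \/ eT2 M e = Some T]) seg (ea M e) (eb M e)) /\
    ((forall T, exists (z : P) (r : R), rho * hT T <= r /\ eball z r `<=` elem M T /\
          forall x y, elem M T x -> eball z r y -> seg x y `<=` elem M T) /\
       (forall e T, (eT1 M e = T \/ eT2 M e = Some T) ->
          rho * hT T <= edist (ea M e) (eb M e))).

(** discrete functions: one function (polynomial) per element *)
Definition dfun (M : mesh) := 'I_(nel M) -> P -> R.
Definition Xh (M : mesh) (k : nat) (v : dfun M) := forall T, poly2 k (v T).
Definition Mh (M : mesh) (k : nat) (q : dfun M) := forall T, poly2 (k - 2) (q T).

Definition jump (M : mesh) (v : dfun M) (e : 'I_(ned M)) : P -> R :=
  fun x => v (eT1 M e) x - (if eT2 M e is Some T2 then v T2 x else 0).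
Definition gjump (M : mesh) (v : dfun M) (e : 'I_(ned M)) (i : 'I_2) : P -> R :=
  fun x => pd i (v (eT1 M e)) x - (if eT2 M e is Some T2 then pd i (v T2) x else 0).
Definition hE (M : mesh) (e : 'I_(ned M)) : R := hT (eT1 M e).

Definition sh (M : mesh) (u v : dfun M) : R :=
  \sum_(e < ned M) (hE e ^+ 3)^-1 *
      edge_int (ea M e) (eb M e) (fun x => jump u e x * jump v e x)
  + \sum_(e < ned M | eT2 M e != None) (hE e)^-1 *
      edge_int (ea M e) (eb M e)
        (fun x => \sum_(i < 2) gjump u e i x * gjump v e i x).

Definition Lop (a : 'I_2 -> 'I_2 -> P -> R) (c : P -> R) (p : P -> R) : P -> R :=
  fun x => \sum_(i < 2) \sum_(j < 2) a i j x * pd i (pd j p) x + c x * p x.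

Definition bh (M : mesh) a c (v q : dfun M) : R :=
  \sum_(T < nel M) area_int (elem M T) (fun x => Lop a c (v T) x * q T x).

Definition is_L2proj (T : set P) (m : nat) (f p : P -> R) : Prop :=
  poly2 m p /\ forall q, poly2 m q -> area_int T (fun x => (f x - p x) * q x) = 0.
Definition L2proj (T : set P) (m : nat) (f : P -> R) : P -> R :=
  xget (fun _ => 0) [set p | is_L2proj T m f p].

Definition starnorm2 (M : mesh) a c (k : nat) (v : dfun M) : R :=
  \sum_(T < nel M)
     area_int (elem M T) (fun x => L2proj (elem M T) (k - 2) (Lop a c (v T)) x ^+ 2)
  + sh v v.

End Defs.

(** For [v] in [Xi_h] and an element [T], let [p] be the L^2(T) projection of
    [L v] onto polynomials of degree [k - 2]. Testing [b_h(v, .) = 0] against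
    the element of [M_h] equal to [p] on [T] and to [0] elsewhere gives
    [(L v, p)_T = 0], while [(L v - p, p)_T = 0] by definition of [p]; hence
    [||p||_T^2 = 0]. So the volume part of [||v||_*^2] vanishes and the
    inequality holds with [alpha = 1]. *)

From Pilot Require Import Defs.
From mathcomp Require Import all_boot all_order all_algebra.
From mathcomp Require Import all_classical all_reals all_analysis.
From mathcomp Require Import ring lra.
Import Order.TTheory GRing.Theory Num.Theory numFieldNormedType.Exports.
Local Open Scope classical_set_scope.
Local Open Scope ring_scope.
Set Implicit Arguments.

Lemma derive_linear (R : realType) (V W : normedModType R) (f : {linear V -> W})
    (x e : V) :
  continuous f -> derivable f x e /\ 'D_e f x = f e.
Proof.
move=> cf; have df := linear_differentiable x cf.
by split; [exact: diff_derivable | rewrite deriveE // diff_lin].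
Qed.

Section PolynomialFunctions.
Context {R : realType}.
Local Notation P := (R * R)%type.

Inductive polyfun : (P -> R) -> Prop :=
| polyfun_cst r : polyfun (fun _ => r)
| polyfun_fst : polyfun (fun x => x.1)
| polyfun_snd : polyfun (fun x => x.2)
| polyfun_add f g : polyfun f -> polyfun g -> polyfun (fun x => f x + g x)
| polyfun_mul f g : polyfun f -> polyfun g -> polyfun (fun x => f x * g x).

Lemma polyfun_sum n (F : 'I_n -> P -> R) :
  (forall i, polyfun (F i)) -> polyfun (fun x => \sum_(i < n) F i x).
Proof.
elim: n F => [|n IH] F HF.
  under eq_fun do rewrite big_ord0; exact: polyfun_cst.
under eq_fun do rewrite big_ord_recr /=.
by apply: polyfun_add => //; apply: IH.
Qed.

Lemma polyfun_exp f n : polyfun f -> polyfun (fun x => f x ^+ n).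
Proof.
move=> pf; elim: n => [|n IH].
  under eq_fun do rewrite expr0; exact: polyfun_cst.
under eq_fun do rewrite exprS; exact: polyfun_mul.
Qed.

Lemma poly2_polyfun m p : poly2 m p -> polyfun p.
Proof.
move=> [cf /funext ->]; apply: polyfun_sum => i.
under eq_fun do rewrite big_mkcond /=.
apply: polyfun_sum => j; case: (i + j <= m)%N; last exact: polyfun_cst.
apply: polyfun_mul; last exact: polyfun_exp polyfun_snd.
by apply: polyfun_mul; [exact: polyfun_cst | exact: polyfun_exp polyfun_fst].
Qed.

Lemma polyfun_derive f (e : P) :
  polyfun f -> (forall x, derivable f x e) /\ polyfun ('D_e f).
Proof.
elim=> {f} [r | | | f g _ [df pf] _ [dg pg] | f g Pf [df pf] Pg [dg pg]].
- split=> [x|]; first exact: derivable_cst.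
  under eq_fun do rewrite derive_cst; exact: polyfun_cst.
- have cf : continuous (@fst R R) by move=> y; exact: cvg_fst.
  have De x := derive_linear fst x e cf.
  split=> [x|]; first by case: (De x).
  under eq_fun => x do case: (De x) => _ ->; exact: polyfun_cst.
- have cs : continuous (@snd R R) by move=> y; exact: cvg_snd.
  have De x := derive_linear snd x e cs.
  split=> [x|]; first by case: (De x).
  under eq_fun => x do case: (De x) => _ ->; exact: polyfun_cst.
- split=> [x|]; first exact: (derivableD (df x) (dg x)).
  by under eq_fun => x do rewrite (deriveD (df x) (dg x)); exact: polyfun_add.
- split=> [x|]; first exact: (derivableM (df x) (dg x)).
  under eq_fun => x do rewrite (deriveM (df x) (dg x)).
  by apply: polyfun_add; apply: polyfun_mul.
Qed.

Lemma polyfun_pd i f : polyfun f -> polyfun (pd i f).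
Proof. by move=> /(polyfun_derive (ebasis i)) []. Qed.

End PolynomialFunctions.

Section BoundedMeasurable.
Context {R : realType}.
Local Notation P := (R * R)%type.

Definition box (q : (rat * rat) * (rat * rat)) : set P :=
  `]ratr q.1.1, ratr q.1.2[ `*` `]ratr q.2.1, ratr q.2.2[.

Lemma open_box_cover (T : set P) x : open T -> T x ->
  exists2 q, box q x & box q `<=` T.
Proof.
move=> oT /oT /nbhs_ballP [e e0 He].
have rat_near (y : R) : exists2 a : rat * rat,
    y - e < ratr a.1 < y & y < ratr a.2 < y + e.
  have [a1 /[!in_itv] /= Ha1] : exists q : rat, ratr q \in `]y - e, y[.
    by apply: rat_in_itvoo; rewrite ltrBlDr ltrDl.
  have [a2 /[!in_itv] /= Ha2] : exists q : rat, ratr q \in `]y, y + e[.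
    by apply: rat_in_itvoo; rewrite ltrDl.
  by exists (a1, a2).
have [q1 /andP[? ?] /andP[? ?]] := rat_near x.1.
have [q2 /andP[? ?] /andP[? ?]] := rat_near x.2.
exists (q1, q2); first by split; rewrite /= in_itv /=; apply/andP.
move=> y [] /=; rewrite !in_itv /= => /andP[? ?] /andP[? ?]; apply: He.
by split; rewrite /= -ball_normE /ball_ /= ltr_norml; apply/andP; split; lra.
Qed.

Lemma open_measurable2 (T : set P) : open T -> measurable T.
Proof.
move=> oT.
pose F n := if unpickle n is Some q then
              if `[< box q `<=` T >] then box q else set0
            else set0.
have -> : T = \bigcup_n F n.
  apply/seteqP; split=> [x Tx | x [n _]].
    have [q qx qT] := open_box_cover x oT Tx.
    exists (pickle q); first exact: I.
    by rewrite /F pickleK (asboolT qT).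
  by rewrite /F; case: unpickle => [q|] //; case: asboolP => // qT /qT.
apply: bigcupT_measurable => n; rewrite /F; case: unpickle => [q|] //.
by case: asboolP => _ //; apply: measurableX; exact: measurable_itv.
Qed.

Lemma ebounded_coord (T : set P) : ebounded T ->
  exists B : R, forall x, T x -> `|x.1| <= B /\ `|x.2| <= B.
Proof.
move=> [Mb HMb]; exists Mb => x /HMb.
rewrite /Defs.edist /= !sub0r !sqrrN => xMb.
by split; apply: le_trans xMb; rewrite -sqrtr_sqr; apply: ler_wsqrtr;
  rewrite ?lerDl ?lerDr sqr_ge0.
Qed.

Lemma leb2_ebounded_lty (T : set P) : measurable T -> ebounded T -> (leb2 T < +oo)%E.
Proof.
move=> mT /ebounded_coord [B HB].
pose I : set R := `](- (B + 1)), B + 1[%classic.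
have TI : T `<=` I `*` I.
  by move=> x /HB []; rewrite !ler_norml => /andP[? ?] /andP[? ?];
    split; rewrite /I /= in_itv /=; apply/andP; split; lra.
have mI : measurable I by exact: measurable_itv.
have IIfin : (lebesgue_measure I < +oo)%E.
  by rewrite lebesgue_measure_itv /=; case: ifP => _; rewrite ?ltry // -EFinD ltry.
apply: le_lt_trans (le_measure leb2 _ _ TI) _; rewrite ?inE //.
  exact: measurableX.
rewrite /leb2 /= product_measure1E //; apply: lte_mul_pinfty => //.
by rewrite ge0_fin_numE.
Qed.

Definition bdd_measurable (E : set P) (g : P -> R) :=
  measurable_fun setT g /\ exists C, forall x, E x -> `|g x| <= C.

Lemma bdd_measurable_integrable (T : set P) g :
  measurable T -> ebounded T -> bdd_measurable T g ->
  leb2.-integrable T (EFin \o g).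
Proof.
move=> mT bT [mg [C HC]]; apply: measurable_bounded_integrable => //.
- exact: leb2_ebounded_lty.
- exact: measurable_funS mg.
exists C; split; first exact: num_real.
by move=> C' CC' x Tx; apply: le_trans (HC x Tx) (ltW CC').
Qed.

Lemma bdd_measurableS (E F : set P) g :
  E `<=` F -> bdd_measurable F g -> bdd_measurable E g.
Proof. by move=> EF [mg [C HC]]; split=> //; exists C => x /EF /HC. Qed.

Variable E : set P.

Lemma bdd_measurable_cst r : bdd_measurable E (fun _ => r).
Proof. by split; [exact: measurable_cst | exists `|r|]. Qed.

Lemma bdd_measurableD f g : bdd_measurable E f -> bdd_measurable E g ->
  bdd_measurable E (fun x => f x + g x).
Proof.
move=> [mf [C1 H1]] [mg [C2 H2]].
split; first exact: measurable_realfun.measurable_funD.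
by exists (C1 + C2) => x Ex; rewrite (le_trans (ler_normD _ _)) ?lerD ?H1 ?H2.
Qed.

Lemma bdd_measurableM f g : bdd_measurable E f -> bdd_measurable E g ->
  bdd_measurable E (fun x => f x * g x).
Proof.
move=> [mf [C1 H1]] [mg [C2 H2]].
split; first exact: measurable_realfun.measurable_funM.
by exists (C1 * C2) => x Ex; rewrite normrM ler_pM ?H1 ?H2.
Qed.

Lemma bdd_measurableB f g : bdd_measurable E f -> bdd_measurable E g ->
  bdd_measurable E (fun x => f x - g x).
Proof.
move=> bf bg; under eq_fun do rewrite -mulN1r.
apply: bdd_measurableD => //.
by apply: bdd_measurableM => //; exact: bdd_measurable_cst.
Qed.

Lemma bdd_measurable_sum n (F : 'I_n -> P -> R) :
  (forall i, bdd_measurable E (F i)) ->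
  bdd_measurable E (fun x => \sum_(i < n) F i x).
Proof.
elim: n F => [|n IH] F HF.
  under eq_fun do rewrite big_ord0; exact: bdd_measurable_cst.
under eq_fun do rewrite big_ord_recr /=.
by apply: bdd_measurableD => //; apply: IH.
Qed.

Lemma polyfun_bdd_measurable g : ebounded E -> polyfun g -> bdd_measurable E g.
Proof.
move=> /ebounded_coord [B HB]; elim=> {g}.
- exact: bdd_measurable_cst.
- by split; [exact: measurable_fst | exists B => x /HB []].
- by split; [exact: measurable_snd | exists B => x /HB []].
- by move=> f g _ ? _ ?; exact: bdd_measurableD.
- by move=> f g _ ? _ ?; exact: bdd_measurableM.
Qed.

End BoundedMeasurable.

Section L2Projection.
Context {R : realType}.
Local Notation P := (R * R)%type.

Lemma area_int0 (T : set P) : area_int T (fun _ => 0) = 0.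
Proof. by rewrite /area_int /Rintegral integral0. Qed.

Lemma L2proj_sqr_area_int_eq0 (T : set P) m f :
  measurable T -> ebounded T -> bdd_measurable T f ->
  (forall q, poly2 m q -> area_int T (fun x => f x * q x) = 0) ->
  area_int T (fun x => L2proj T m f x ^+ 2) = 0.
Proof.
move=> mT bT bf f_orth; rewrite /L2proj.
have [ex | nex] := pselect (exists p, is_L2proj T m f p); last first.
  (* no projection exists, so [L2proj] is the default value [0] of [xget] *)
  rewrite xgetPN => [|p proj_p]; last by apply: nex; exists p.
  by under eq_fun do rewrite expr0n; exact: area_int0.
have [pp p_orth] := xgetPex (fun _ => 0) ex.
set p := xget _ _ in pp p_orth *.
have bp : bdd_measurable T p := polyfun_bdd_measurable bT (poly2_polyfun pp).
have -> : (fun x => p x ^+ 2) = fun x => f x * p x - (f x - p x) * p x.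
  by apply: funext => x; ring.
rewrite /area_int RintegralB //.
- by rewrite [X in X - _]f_orth // [X in _ - X]p_orth // subr0.
- by apply: bdd_measurable_integrable => //; exact: bdd_measurableM.
- apply: bdd_measurable_integrable => //.
  by apply: bdd_measurableM => //; exact: bdd_measurableB.
Qed.

End L2Projection.

Section MeshFunctions.
Context {R : realType}.
Local Notation P := (R * R)%type.

Lemma Lop_bdd_measurable (E : set P) a c p :
  ebounded E -> (forall i j, bdd_measurable E (a i j)) -> bdd_measurable E c ->
  polyfun p -> bdd_measurable E (Lop a c p).
Proof.
move=> bE ba bc pp; apply: bdd_measurableD; last first.
  by apply: bdd_measurableM => //; exact: polyfun_bdd_measurable.
apply: bdd_measurable_sum => i; apply: bdd_measurable_sum => j.
apply: bdd_measurableM => //; apply: polyfun_bdd_measurable => //.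
by apply: polyfun_pd; exact: polyfun_pd.
Qed.

Lemma is_mesh_elem (O : set P) rho (M : mesh) T : is_mesh O rho M ->
  [/\ measurable (elem M T), ebounded (elem M T) & elem M T `<=` O].
Proof.
by case=> /(_ T) [[oT [_ [_ [bT _]]]] TO] _; split=> //; exact: open_measurable2.
Qed.

Definition dfun_at {M : @mesh R} (T : 'I_(nel M)) (p : P -> R) : dfun M :=
  fun T' => if T' == T then p else fun _ => 0.

Lemma Mh_dfun_at (M : mesh) k (T : 'I_(nel M)) p :
  poly2 (k - 2) p -> Mh k (dfun_at T p).
Proof.
move=> pp T'; rewrite /dfun_at; case: eqP => // _; exists (fun _ _ => 0) => x.
by rewrite big1 // => i _; rewrite big1 // => j _; rewrite !mul0r.
Qed.

Lemma bh_dfun_at (M : mesh) a c (v : dfun M) (T : 'I_(nel M)) p :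
  bh a c v (dfun_at T p) = area_int (elem M T) (fun x => Lop a c (v T) x * p x).
Proof.
rewrite /bh (bigD1 T) //= big1 ?addr0 /dfun_at ?eqxx // => T' /negbTE ->.
by under eq_fun do rewrite mulr0; exact: area_int0.
Qed.

Lemma starnorm2_eq_sh (O : set P) rho a c k (M : mesh) (v : dfun M) :
  (forall i j, bdd_measurable O (a i j)) -> bdd_measurable O c ->
  is_mesh O rho M -> Xh k v -> (forall q, Mh k q -> bh a c v q = 0) ->
  starnorm2 a c k v = sh v v.
Proof.
move=> ba bc meshM Xv bh_v; rewrite /starnorm2 big1 ?add0r // => T _.
have [mT bT TO] := is_mesh_elem T meshM.
apply: L2proj_sqr_area_int_eq0 => // [|q pq].
  apply: Lop_bdd_measurable (poly2_polyfun (Xv T)) => // [i j|];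
    exact: bdd_measurableS TO _.
by rewrite -bh_dfun_at bh_v //; exact: Mh_dfun_at.
Qed.

End MeshFunctions.

Theorem lemma3p5 (R : realType) (Omega : set (R * R))
    (a : 'I_2 -> 'I_2 -> R * R -> R) (c : R * R -> R) (k : nat) (rho : R) :
  lipschitz_domain Omega ->
  (forall i j, a i j = a j i) ->
  (exists lam : R, 0 < lam /\ forall x, Omega x -> forall xi : 'I_2 -> R,
     lam * \sum_(i < 2) xi i ^+ 2 <= \sum_(i < 2) \sum_(j < 2) a i j x * xi i * xi j) ->
  (exists Ma : R, forall i j x, Omega x -> `|a i j x| <= Ma) ->
  (forall i j, measurable_fun [set: R * R] (a i j)) ->
  (forall x, Omega x -> c x <= 0) ->
  (exists Mc : R, forall x, Omega x -> `|c x| <= Mc) ->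
  measurable_fun [set: R * R] c ->
  (2 <= k)%N -> 0 < rho ->
  exists alpha : R, 0 < alpha /\
    forall M : @mesh R, is_mesh Omega rho M ->
    forall v : dfun M, Xh k v ->
      (forall q : dfun M, Mh k q -> bh a c v q = 0) ->
      sh v v >= alpha * starnorm2 a c k v.
Proof.
move=> _ _ _ [Ma HMa] ma _ [Mc HMc] mc _ _.
have ba i j : bdd_measurable Omega (a i j).
  by split; [exact: ma | exists Ma; exact: HMa].
have bc : bdd_measurable Omega c by split; [exact: mc | exists Mc].
exists 1; split=> // M meshM v Xv bh_v.
by rewrite mul1r (starnorm2_eq_sh ba bc meshM Xv bh_v).
Qed.
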